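(* Let $\mathfrak{A}=\langle A,\pi\rangle$ be an $\mathbb{M}$-algebra and let ${\sqsubseteq}\subseteq A\times A$ be a preorder that contains the ordering $\leq$ of $A$. Let $p_0,p_1:A\times A\to A$ be the two projections. The following conditions are equivalent: (1) $\sqsubseteq$ is a congruence ordering on $\mathfrak{A}$; (2) ${\sqsubseteq}=\ker\varphi$ for some morphism $\varphi:\mathfrak{A}\to\mathfrak{B}$ of $\mathbb{M}$-algebras; (3) for every $u\in\mathbb{M}({\sqsubseteq})$ (where $\sqsubseteq$ is regarded as a subset of $A\times A$ with the induced product order) we have $\pi(\mathbb{M}p_0(u))\sqsubseteq\pi(\mathbb{M}p_1(u))$; (4) $\sqsubseteq$ induces a subalgebra of $\mathfrak{A}\times\mathfrak{A}$, i.e. $\pi[\mathbb{M}({\sqsubseteq})]\subseteq{\sqsubseteq}$ where $\pi$ is the (componentwise) product of $\mathfrak{A}\times\mathfrak{A}$.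
   Context: Fix a set $\Xi$ of sorts. $\mathsf{Pos}^\Xi$ is the category whose objects (''sets'') are $\Xi$-sorted families $A=(A_\xi)_{\xi\in\Xi}$ of partially ordered sets (identified with their disjoint union; elements of different sorts are incomparable) and whose morphisms (''functions'') $f:A\to B$ are families of order-preserving maps $f_\xi:A_\xi\to B_\xi$. $\mathbb{M}$ is a monad on $\mathsf{Pos}^\Xi$: a functor with natural transformations $\mathrm{flat}:\mathbb{M}\mathbb{M}\Rightarrow\mathbb{M}$, $\mathrm{sing}:\mathrm{Id}\Rightarrow\mathbb{M}$ with $\mathrm{flat}\circ\mathrm{sing}=\mathrm{id}$, $\mathrm{flat}\circ\mathbb{M}\mathrm{sing}=\mathrm{id}$, $\mathrm{flat}\circ\mathrm{flat}=\mathrm{flat}\circ\mathbb{M}\mathrm{flat}$. Standing assumptions: $\mathbb{M}$ maps injective, surjective and bijective functions to functions of the same kind; $\mathbb{M}$ preserves preimages ($\mathbb{M}(f^{-1}[P])=(\mathbb{M}f)^{-1}[\mathbb{M}P]$ for $f:A\to B$, $P\subseteq B$); and $\mathbb{M}$ uses the standard ordering: for $s,t\in\mathbb{M}A$, $s\leq t$ iff $s=\mathbb{M}p(u)$, $t=\mathbb{M}q(u)$ for some $u\in\mathbb{M}R$, where $R\subseteq A\times A$ is the order relation of $A$ and $p,q$ are the projections. An $\mathbb{M}$-algebra is $\langle A,\pi\rangle$ with $\pi:\mathbb{M}A\to A$ satisfying $\pi\circ\mathbb{M}\pi=\pi\circ\mathrm{flat}$ and $\pi\circ\mathrm{sing}=\mathrm{id}$;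 a morphism $\varphi:\mathfrak{A}\to\mathfrak{B}$ is a function with $\varphi\circ\pi=\pi\circ\mathbb{M}\varphi$. The kernel of a function $f:A\to B$ is $\ker f=\{\langle a,a'\rangle: f(a)\leq f(a')\}$. For a preorder $\sqsubseteq$ on $A$ containing $\leq$, $A/{\sqsubseteq}$ is the set of $\sqsubseteq$-equivalence classes ordered by $[a]\leq[b]$ iff $a\sqsubseteq b$, $q:A\to A/{\sqsubseteq}$ is the quotient map, and $s\sqsubseteq_{\mathbb{M}}t$ (for $s,t\in\mathbb{M}A$) means $\mathbb{M}q(s)\leq\mathbb{M}q(t)$. The preorder $\sqsubseteq$ is a congruence ordering on $\mathfrak{A}$ if $s\sqsubseteq_{\mathbb{M}}t$ implies $\pi(s)\sqsubseteq\pi(t)$. *)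

From Stdlib Require Import ProofIrrelevance FunctionalExtensionality PropExtensionality.

(* An object: a Xi-sorted family of partially ordered sets.
   Elements of different sorts live in different types, hence are incomparable. *)
Record Obj (Xi : Type) := mkObj {
  car : Xi -> Type;
  ole : forall x, car x -> car x -> Prop;
  ole_refl : forall x a, ole x a a;
  ole_trans : forall x a b c, ole x a b -> ole x b c -> ole x a c;
  ole_antisym : forall x a b, ole x a b -> ole x b a -> a = b }.
Arguments car {Xi} _ _.
Arguments ole {Xi} _ {x} _ _.
Arguments ole_refl {Xi} _ {x} _.

Record Hom {Xi : Type} (A B : Obj Xi) := mkHom {
  fn : forall x, car A x -> car B x;
  fn_mono : forall x a b, ole A a b -> ole B (fn x a) (fn x b) }.
Arguments mkHom {Xi A B} _ _.
Arguments fn {Xi A B} _ {x} _.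

Definition idH {Xi} (A : Obj Xi) : Hom A A :=
  mkHom (fun x a => a) (fun x a b h => h).

Definition compH {Xi} {A B C : Obj Xi} (g : Hom B C) (f : Hom A B) : Hom A C :=
  mkHom (fun x a => fn g (fn f a))
        (fun x a b h => fn_mono _ _ g x _ _ (fn_mono _ _ f x a b h)).

Definition injectiveH {Xi} {A B : Obj Xi} (f : Hom A B) : Prop :=
  forall x (a b : car A x), fn f a = fn f b -> a = b.
Definition surjectiveH {Xi} {A B : Obj Xi} (f : Hom A B) : Prop :=
  forall x (b : car B x), exists a : car A x, fn f a = b.
Definition bijectiveH {Xi} {A B : Obj Xi} (f : Hom A B) : Prop :=
  injectiveH f /\ surjectiveH f.

Section Prod.
Context {Xi : Type} (A B : Obj Xi).

Definition prod_le x (p q : car A x * car B x) : Prop :=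
  ole A (fst p) (fst q) /\ ole B (snd p) (snd q).

Lemma prod_refl x p : prod_le x p p.
Proof. split; apply ole_refl. Qed.
Lemma prod_trans x p q r : prod_le x p q -> prod_le x q r -> prod_le x p r.
Proof. intros [h1 h2] [h3 h4]; split; eapply ole_trans; eauto. Qed.
Lemma prod_antisym x p q : prod_le x p q -> prod_le x q p -> p = q.
Proof.
  destruct p, q; intros [h1 h2] [h3 h4]; simpl in *.
  f_equal; eapply ole_antisym; eauto.
Qed.

Definition ProdO : Obj Xi :=
  mkObj Xi (fun x => (car A x * car B x)%type) prod_le prod_refl prod_trans prod_antisym.

Definition proj0 : Hom ProdO A :=
  mkHom (fun x (p : car ProdO x) => fst p) (fun x (p q : car ProdO x) (h : ole ProdO p q) => proj1 h).
Definition proj1H : Hom ProdO B :=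
  mkHom (fun x (p : car ProdO x) => snd p) (fun x (p q : car ProdO x) (h : ole ProdO p q) => proj2 h).
End Prod.

Section Pair.
Context {Xi : Type} {C A B : Obj Xi} (f : Hom C A) (g : Hom C B).
Definition pairH : Hom C (ProdO A B) :=
  @mkHom Xi C (ProdO A B) (fun x c => (fn f c, fn g c))
        (fun x a b h => conj (fn_mono _ _ f x a b h) (fn_mono _ _ g x a b h)).
End Pair.

Section Sub.
Context {Xi : Type} (A : Obj Xi) (P : forall x, car A x -> Prop).

Definition sub_le x (a b : {a : car A x | P x a}) : Prop := ole A (proj1_sig a) (proj1_sig b).
Lemma sub_refl x a : sub_le x a a.
Proof. apply ole_refl. Qed.
Lemma sub_trans x a b c : sub_le x a b -> sub_le x b c -> sub_le x a c.
Proof. apply ole_trans. Qed.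
Lemma sub_antisym x a b : sub_le x a b -> sub_le x b a -> a = b.
Proof.
  destruct a as [a ha], b as [b hb]; unfold sub_le; simpl; intros h1 h2.
  assert (a = b) by (eapply ole_antisym; eauto). subst.
  f_equal; apply proof_irrelevance.
Qed.

Definition SubO : Obj Xi :=
  mkObj Xi (fun x => {a : car A x | P x a}) sub_le sub_refl sub_trans sub_antisym.

Definition incl : Hom SubO A :=
  mkHom (fun x (a : car SubO x) => proj1_sig a) (fun x (a b : car SubO x) (h : ole SubO a b) => h).
End Sub.

Definition preim {Xi} {A B : Obj Xi} (f : Hom A B) (P : forall x, car B x -> Prop)
  : forall x, car A x -> Prop := fun x a => P x (fn f a).

Definition OrdRel {Xi} (A : Obj Xi) : forall x, car (ProdO A A) x -> Prop :=
  fun x p => ole A (fst p) (snd p).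

Record Monad (Xi : Type) := mkMonad {
  Mo : Obj Xi -> Obj Xi;
  Mm : forall {A B : Obj Xi}, Hom A B -> Hom (Mo A) (Mo B);
  Mm_id : forall A x (s : car (Mo A) x), fn (Mm (idH A)) s = s;
  Mm_comp : forall (A B C : Obj Xi) (g : Hom B C) (f : Hom A B) x (s : car (Mo A) x),
      fn (Mm (compH g f)) s = fn (Mm g) (fn (Mm f) s);
  flat : forall A, Hom (Mo (Mo A)) (Mo A);
  sing : forall A, Hom A (Mo A);
  flat_nat : forall A B (f : Hom A B) x (s : car (Mo (Mo A)) x),
      fn (Mm f) (fn (flat A) s) = fn (flat B) (fn (Mm (Mm f)) s);
  sing_nat : forall A B (f : Hom A B) x (a : car A x),
      fn (Mm f) (fn (sing A) a) = fn (sing B) (fn f a);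
  flat_sing : forall A x (s : car (Mo A) x), fn (flat A) (fn (sing (Mo A)) s) = s;
  flat_Msing : forall A x (s : car (Mo A) x), fn (flat A) (fn (Mm (sing A)) s) = s;
  flat_flat : forall A x (s : car (Mo (Mo (Mo A))) x),
      fn (flat A) (fn (flat (Mo A)) s) = fn (flat A) (fn (Mm (flat A)) s);
  M_inj : forall A B (f : Hom A B), injectiveH f -> injectiveH (Mm f);
  M_surj : forall A B (f : Hom A B), surjectiveH f -> surjectiveH (Mm f);
  M_bij : forall A B (f : Hom A B), bijectiveH f -> bijectiveH (Mm f);
  (* M(f^{-1}[P]) = (Mf)^{-1}[MP], subsets MQ of MA being identified with the
     image of M(incl) *)
  M_preim : forall A B (f : Hom A B) (P : forall x, car B x -> Prop) x (s : car (Mo A) x),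
      (exists u : car (Mo (SubO A (preim f P))) x, fn (Mm (incl A (preim f P))) u = s) <->
      (exists v : car (Mo (SubO B P)) x, fn (Mm (incl B P)) v = fn (Mm f) s);
  M_std : forall A x (s t : car (Mo A) x),
      ole (Mo A) s t <->
      exists u : car (Mo (SubO (ProdO A A) (OrdRel A))) x,
        fn (Mm (proj0 A A)) (fn (Mm (incl _ (OrdRel A))) u) = s /\
        fn (Mm (proj1H A A)) (fn (Mm (incl _ (OrdRel A))) u) = t }.
Arguments Mo {Xi} _ _.
Arguments Mm {Xi} _ {A B} _.
Arguments flat {Xi} _ _.
Arguments sing {Xi} _ _.

Record IsAlg {Xi} (M : Monad Xi) (A : Obj Xi) (pi : Hom (Mo M A) A) : Prop := {
  alg_assoc : forall x (s : car (Mo M (Mo M A)) x),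
      fn pi (fn (Mm M pi) s) = fn pi (fn (flat M A) s);
  alg_unit : forall x (a : car A x), fn pi (fn (sing M A) a) = a }.

Definition IsAlgMorph {Xi} (M : Monad Xi) {A B : Obj Xi}
  (piA : Hom (Mo M A) A) (piB : Hom (Mo M B) B) (phi : Hom A B) : Prop :=
  forall x (s : car (Mo M A) x), fn phi (fn piA s) = fn piB (fn (Mm M phi) s).

Definition prod_pi {Xi} (M : Monad Xi) {A : Obj Xi} (pi : Hom (Mo M A) A)
  : Hom (Mo M (ProdO A A)) (ProdO A A) :=
  pairH (compH pi (Mm M (proj0 A A))) (compH pi (Mm M (proj1H A A))).

Definition kerH {Xi} {A B : Obj Xi} (f : Hom A B) : forall x, car A x -> car A x -> Prop :=
  fun x a a' => ole B (fn f a) (fn f a').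

Record IsPreorderExt {Xi} (A : Obj Xi) (sq : forall x, car A x -> car A x -> Prop) : Prop := {
  sq_refl : forall x a, sq x a a;
  sq_trans : forall x a b c, sq x a b -> sq x b c -> sq x a c;
  sq_ext : forall x a b, ole A a b -> sq x a b }.

Section Quot.
Context {Xi : Type} (A : Obj Xi) (sq : forall x, car A x -> car A x -> Prop)
        (H : IsPreorderExt A sq).

Definition cls x (a : car A x) : car A x -> Prop := fun b => sq x a b /\ sq x b a.

Definition qcar x := {P : car A x -> Prop | exists a, P = cls x a}.

Definition q_le x (P Q : qcar x) : Prop :=
  exists a b, proj1_sig P = cls x a /\ proj1_sig Q = cls x b /\ sq x a b.

Lemma cls_eq_sq x a b : cls x a = cls x b -> sq x a b /\ sq x b a.
Proof.
  intro e. assert (h : cls x b b) by (split; apply (sq_refl _ _ H)).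
  rewrite <- e in h. exact h.
Qed.

Lemma q_refl x P : q_le x P P.
Proof.
  destruct P as [P [a ha]]. exists a, a. simpl. repeat split; auto. apply (sq_refl _ _ H).
Qed.

Lemma q_trans x P Q R : q_le x P Q -> q_le x Q R -> q_le x P R.
Proof.
  intros [a [b [e1 [e2 h1]]]] [b' [c [e3 [e4 h2]]]].
  exists a, c. repeat split; auto.
  rewrite e2 in e3. destruct (cls_eq_sq _ _ _ e3) as [hb _].
  eapply (sq_trans _ _ H); [exact h1|]. eapply (sq_trans _ _ H); eauto.
Qed.

Lemma q_antisym x P Q : q_le x P Q -> q_le x Q P -> P = Q.
Proof.
  intros [a [b [e1 [e2 h1]]]] [b' [a' [e3 [e4 h2]]]].
  destruct P as [P pP], Q as [Q pQ]; simpl in *.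
  assert (P = Q).
  { subst P Q. destruct (cls_eq_sq _ _ _ e3) as [hb1 hb2].
    destruct (cls_eq_sq _ _ _ e4) as [ha1 ha2].
    assert (hba : sq x b a).
    { eapply (sq_trans _ _ H); [exact hb1|]. eapply (sq_trans _ _ H); [exact h2| exact ha2]. }
    apply functional_extensionality; intro c; apply propositional_extensionality.
    unfold cls; split; intros [h3 h4]; split.
    - exact (sq_trans _ _ H _ _ _ _ hba h3).
    - exact (sq_trans _ _ H _ _ _ _ h4 h1).
    - exact (sq_trans _ _ H _ _ _ _ h1 h3).
    - exact (sq_trans _ _ H _ _ _ _ h4 hba). }
  revert pP pQ. rewrite H0. intros pP pQ. rewrite (proof_irrelevance _ pP pQ). reflexivity.
Qed.

Definition QuotO : Obj Xi := mkObj Xi qcar q_le q_refl q_trans q_antisym.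

Definition qmap : Hom A QuotO :=
  @mkHom Xi A QuotO (fun x a => exist (fun P => exists a0, P = cls x a0) (cls x a) (ex_intro _ a eq_refl))
        (fun x a b h => ex_intro _ a (ex_intro _ b (conj eq_refl (conj eq_refl (sq_ext _ _ H x a b h))))).
End Quot.

Definition sqM {Xi} (M : Monad Xi) (A : Obj Xi) (sq : forall x, car A x -> car A x -> Prop)
  (H : IsPreorderExt A sq) x (s t : car (Mo M A) x) : Prop :=
  ole (Mo M (QuotO A sq H)) (fn (Mm M (qmap A sq H)) s) (fn (Mm M (qmap A sq H)) t).

Definition IsCongruenceOrdering {Xi} (M : Monad Xi) (A : Obj Xi) (pi : Hom (Mo M A) A)
  (sq : forall x, car A x -> car A x -> Prop) (H : IsPreorderExt A sq) : Prop :=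
  forall x (s t : car (Mo M A) x), sqM M A sq H x s t -> sq x (fn pi s) (fn pi t).

Definition relSub {Xi} {A : Obj Xi} (sq : forall x, car A x -> car A x -> Prop)
  : forall x, car (ProdO A A) x -> Prop := fun x p => sq x (fst p) (snd p).

(* (1) => (2): when [sq] is a congruence ordering, [pi] descends along the
   quotient map [q : A -> A/sq], and [ker q = sq].
   (2) => (3): an element of [M(sq)] is pushed by [phi] into [M(<=_B)], so the
   standard ordering gives [M phi (M p0 u) <= M phi (M p1 u)], and [phi] is a
   morphism.
   (3) => (1): given [Mq s <= Mq t], choose representatives [r] of the classes;
   the pairs [(a, r [a])], [(r [a], a)] and [(r c, r d)] for [c <= d] lie in [sq],
   so (3) yields [pi s sq pi (M(r q) s) sq pi (M(r q) t) sq pi t]. *)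
From Stdlib Require Import ProofIrrelevance FunctionalExtensionality IndefiniteDescription.

Lemma hom_ext {Xi} {A B : Obj Xi} (f g : Hom A B) :
  (forall x a, fn f (x:=x) a = fn g a) -> f = g.
Proof.
  destruct f as [f fm], g as [g gm]; simpl; intro H.
  assert (f = g) as <-.
  { apply functional_extensionality_dep; intro x.
    apply functional_extensionality; intro a; apply H. }
  f_equal; apply proof_irrelevance.
Qed.

Lemma Mm_ext {Xi} (M : Monad Xi) {A B} (f g : Hom A B) x (s : car (Mo M A) x) :
  (forall x a, fn f (x:=x) a = fn g a) -> fn (Mm M f) s = fn (Mm M g) s.
Proof. intro H; rewrite (hom_ext f g H); reflexivity. Qed.

Ltac Mm_congr := rewrite <- ?Mm_comp; apply Mm_ext; intros; reflexivity.

Definition section_of {Xi} {A B : Obj Xi} (f : Hom A B) (Hf : surjectiveH f) x (b : car B x)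
  : car A x := proj1_sig (constructive_indefinite_description _ (Hf x b)).

Lemma section_ofK {Xi} {A B : Obj Xi} (f : Hom A B) (Hf : surjectiveH f) x (b : car B x) :
  fn f (section_of f Hf x b) = b.
Proof. unfold section_of; destruct constructive_indefinite_description; assumption. Qed.

(* Every map out of [Disc A] is monotone, and [M iotaH] is a bijection, so [M]
   can act on the non-monotone maps the proof of (3) => (1) needs. *)
Definition Disc {Xi} (A : Obj Xi) : Obj Xi :=
  mkObj Xi (car A) (fun x a b => a = b) (fun x a => eq_refl)
    (fun x a b c h1 h2 => eq_trans h1 h2) (fun x a b h1 h2 => h1).

Definition discH {Xi} {A B : Obj Xi} (f : forall x, car A x -> car B x) : Hom (Disc A) B.
Proof.
  refine (@mkHom Xi (Disc A) B f _).
  intros x a b h; simpl in h; subst; apply ole_refl.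
Defined.

Definition iotaH {Xi} (A : Obj Xi) : Hom (Disc A) A := discH (fun x a => a).

Lemma Mm_iota_surj {Xi} (M : Monad Xi) (A : Obj Xi) : surjectiveH (Mm M (iotaH A)).
Proof. apply M_surj; intros x b; exists b; reflexivity. Qed.

Lemma Mm_iota_inj {Xi} (M : Monad Xi) (A : Obj Xi) : injectiveH (Mm M (iotaH A)).
Proof. apply M_inj; intros x a b h; exact h. Qed.

Definition rel_fst {Xi} (M : Monad Xi) {A : Obj Xi} (R : forall x, car A x -> car A x -> Prop)
  x (u : car (Mo M (SubO (ProdO A A) (relSub R))) x) : car (Mo M A) x :=
  fn (Mm M (proj0 A A)) (fn (Mm M (incl _ (relSub R))) u).

Definition rel_snd {Xi} (M : Monad Xi) {A : Obj Xi} (R : forall x, car A x -> car A x -> Prop)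
  x (u : car (Mo M (SubO (ProdO A A) (relSub R))) x) : car (Mo M A) x :=
  fn (Mm M (proj1H A A)) (fn (Mm M (incl _ (relSub R))) u).

Definition IsSubalgebraRel {Xi} (M : Monad Xi) {A : Obj Xi} (pi : Hom (Mo M A) A)
  (R : forall x, car A x -> car A x -> Prop) : Prop :=
  forall x (u : car (Mo M (SubO (ProdO A A) (relSub R))) x),
    R x (fn pi (rel_fst M R x u)) (fn pi (rel_snd M R x u)).

Section QuotientAlgebra.
Context {Xi : Type} (M : Monad Xi) {A B : Obj Xi} (pi : Hom (Mo M A) A)
  (Hpi : IsAlg M A pi) (q : Hom A B) (q_surj : surjectiveH q).
Hypothesis q_compat : forall x (s t : car (Mo M A) x),
  ole (Mo M B) (fn (Mm M q) s) (fn (Mm M q) t) -> ole B (fn q (fn pi s)) (fn q (fn pi t)).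

Let Mq_surj : surjectiveH (Mm M q) := M_surj _ M _ _ q q_surj.

Definition quot_pi : Hom (Mo M B) B.
Proof.
  refine (mkHom (fun x z => fn q (fn pi (section_of (Mm M q) Mq_surj x z))) _).
  intros x z z' h; apply q_compat; rewrite !section_ofK; exact h.
Defined.

Lemma quot_piE x (s : car (Mo M A) x) : fn quot_pi (fn (Mm M q) s) = fn q (fn pi s).
Proof.
  simpl; apply ole_antisym; apply q_compat; rewrite section_ofK; apply ole_refl.
Qed.

Lemma quot_pi_alg : IsAlg M B quot_pi.
Proof.
  split.
  - intros x Z.
    destruct (M_surj _ M _ _ _ Mq_surj x Z) as [S <-].
    assert (Hcomm : compH quot_pi (Mm M q) = compH q pi)
      by (apply hom_ext; apply quot_piE).
    rewrite <- Mm_comp, Hcomm, Mm_comp, quot_piE.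
    rewrite <- flat_nat, quot_piE.
    f_equal; apply (alg_assoc M A pi Hpi).
  - intros x b.
    destruct (q_surj x b) as [a <-].
    rewrite <- sing_nat, quot_piE.
    f_equal; apply (alg_unit M A pi Hpi).
Qed.

Lemma quot_morph : IsAlgMorph M pi quot_pi q.
Proof. intros x s; symmetry; apply quot_piE. Qed.

End QuotientAlgebra.

Lemma qmap_surj {Xi} (A : Obj Xi) sq (Hsq : IsPreorderExt A sq) : surjectiveH (qmap A sq Hsq).
Proof.
  intros x [P [a ->]]; exists a.
  apply ProofIrrelevanceTheory.subset_eq_compat; reflexivity.
Qed.

Lemma ker_qmap {Xi} (A : Obj Xi) sq (Hsq : IsPreorderExt A sq) x (a b : car A x) :
  sq x a b <-> kerH (qmap A sq Hsq) x a b.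
Proof.
  split.
  - intro h; exists a, b; auto.
  - intros [a0 [b0 [e1 [e2 h]]]]; simpl in e1, e2.
    destruct (cls_eq_sq A sq Hsq x a a0 e1) as [h1 _].
    destruct (cls_eq_sq A sq Hsq x b b0 e2) as [_ h2].
    eapply (sq_trans _ _ Hsq); [exact h1|].
    eapply (sq_trans _ _ Hsq); [exact h | exact h2].
Qed.

Lemma congruence_kernel {Xi} (M : Monad Xi) (A : Obj Xi) (pi : Hom (Mo M A) A)
  (Hpi : IsAlg M A pi) sq (Hsq : IsPreorderExt A sq) :
  IsCongruenceOrdering M A pi sq Hsq ->
  exists (B : Obj Xi) (piB : Hom (Mo M B) B) (phi : Hom A B),
    IsAlg M B piB /\ IsAlgMorph M pi piB phi /\
    (forall x (a a' : car A x), sq x a a' <-> kerH phi x a a').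
Proof.
  intro H1.
  assert (q_compat : forall x (s t : car (Mo M A) x),
    ole (Mo M (QuotO A sq Hsq)) (fn (Mm M (qmap A sq Hsq)) s) (fn (Mm M (qmap A sq Hsq)) t) ->
    kerH (qmap A sq Hsq) x (fn pi s) (fn pi t)).
  { intros x s t h; apply ker_qmap, H1, h. }
  exists (QuotO A sq Hsq), (quot_pi M pi (qmap A sq Hsq) (qmap_surj A sq Hsq) q_compat),
    (qmap A sq Hsq).
  split; [apply quot_pi_alg, Hpi | split; [apply quot_morph | apply ker_qmap]].
Qed.

Definition ker_corestr {Xi} {A B : Obj Xi} (phi : Hom A B) (R : forall x, car A x -> car A x -> Prop)
  (HR : forall x a a', R x a a' -> kerH phi x a a')
  : Hom (SubO (ProdO A A) (relSub R)) (SubO (ProdO B B) (OrdRel B)).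
Proof.
  refine (@mkHom Xi (SubO (ProdO A A) (relSub R)) (SubO (ProdO B B) (OrdRel B))
    (fun x (p : {p : car A x * car A x | relSub R x p}) => exist _ (fn phi (fst (proj1_sig p)), fn phi (snd (proj1_sig p)))
                        (HR x _ _ (proj2_sig p))) _).
  intros x [[a b] h] [[a' b'] h'] [l1 l2]; split; apply fn_mono; assumption.
Defined.

Lemma kernel_subalgebra {Xi} (M : Monad Xi) {A B : Obj Xi} (piA : Hom (Mo M A) A)
  (piB : Hom (Mo M B) B) (phi : Hom A B) (R : forall x, car A x -> car A x -> Prop) :
  IsAlgMorph M piA piB phi -> (forall x a a', R x a a' <-> kerH phi x a a') ->
  IsSubalgebraRel M piA R.
Proof.
  intros Hm HR x u.
  set (k := ker_corestr phi R (fun x a a' => proj1 (HR x a a'))).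
  assert (Hle : ole (Mo M B) (rel_fst M (@ole Xi B) x (fn (Mm M k) u))
                             (rel_snd M (@ole Xi B) x (fn (Mm M k) u))).
  { apply (M_std _ M B x); eexists; split; reflexivity. }
  assert (e0 : rel_fst M (@ole Xi B) x (fn (Mm M k) u) = fn (Mm M phi) (rel_fst M R x u))
    by (unfold rel_fst; Mm_congr).
  assert (e1 : rel_snd M (@ole Xi B) x (fn (Mm M k) u) = fn (Mm M phi) (rel_snd M R x u))
    by (unfold rel_snd; Mm_congr).
  apply HR; unfold kerH; rewrite !Hm, <- e0, <- e1.
  apply fn_mono, Hle.
Qed.

Section SubalgebraKernel.
Context {Xi : Type} (M : Monad Xi) {A B : Obj Xi} (pi : Hom (Mo M A) A)
  (phi : Hom A B) (phi_surj : surjectiveH phi) (R : forall x, car A x -> car A x -> Prop).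
Hypothesis R_ker : forall x a a', R x a a' <-> kerH phi x a a'.
Hypothesis R_closed : IsSubalgebraRel M pi R.

Let S := SubO (ProdO A A) (relSub R).
Let sect := section_of phi phi_surj.

Lemma R_trans x (a b c : car A x) : R x a b -> R x b c -> R x a c.
Proof. rewrite !R_ker; apply ole_trans. Qed.

Lemma R_sect_mono x (c d : car B x) : ole B c d -> R x (sect x c) (sect x d).
Proof. intro h; apply R_ker; unfold kerH, sect; rewrite !section_ofK; exact h. Qed.

Lemma R_sect_l x (a : car A x) : R x a (sect x (fn phi a)).
Proof. apply R_ker; unfold kerH, sect; rewrite section_ofK; apply ole_refl. Qed.

Lemma R_sect_r x (a : car A x) : R x (sect x (fn phi a)) a.
Proof. apply R_ker; unfold kerH, sect; rewrite section_ofK; apply ole_refl. Qed.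

Let sectD : Hom (Disc B) A := discH sect.
Let phiD : Hom (Disc A) (Disc B) := @discH Xi A (Disc B) (fun x a => fn phi a).

Lemma pi_sect_equiv x (sd : car (Mo M (Disc A)) x) :
  R x (fn pi (fn (Mm M (iotaH A)) sd)) (fn pi (fn (Mm M sectD) (fn (Mm M phiD) sd))) /\
  R x (fn pi (fn (Mm M sectD) (fn (Mm M phiD) sd))) (fn pi (fn (Mm M (iotaH A)) sd)).
Proof.
  set (toL := @discH Xi A S (fun x a => exist (relSub R x) (a, sect x (fn phi a)) (R_sect_l x a))).
  set (toR := @discH Xi A S (fun x a => exist (relSub R x) (sect x (fn phi a), a) (R_sect_r x a))).
  split.
  - assert (h := R_closed x (fn (Mm M toL) sd)).
    replace (fn (Mm M (iotaH A)) sd) with (rel_fst M R x (fn (Mm M toL) sd))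
      by (unfold rel_fst; Mm_congr).
    replace (fn (Mm M sectD) (fn (Mm M phiD) sd)) with (rel_snd M R x (fn (Mm M toL) sd))
      by (unfold rel_snd; Mm_congr).
    exact h.
  - assert (h := R_closed x (fn (Mm M toR) sd)).
    replace (fn (Mm M (iotaH A)) sd) with (rel_snd M R x (fn (Mm M toR) sd))
      by (unfold rel_snd; Mm_congr).
    replace (fn (Mm M sectD) (fn (Mm M phiD) sd)) with (rel_fst M R x (fn (Mm M toR) sd))
      by (unfold rel_fst; Mm_congr).
    exact h.
Qed.

Lemma pi_sect_mono x (zd zd' : car (Mo M (Disc B)) x) :
  ole (Mo M B) (fn (Mm M (iotaH B)) zd) (fn (Mm M (iotaH B)) zd') ->
  R x (fn pi (fn (Mm M sectD) zd)) (fn pi (fn (Mm M sectD) zd')).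
Proof.
  intro h.
  destruct (proj1 (M_std _ M B x _ _) h) as [w [e0 e1]].
  set (W := SubO (ProdO B B) (OrdRel B)).
  destruct (Mm_iota_surj M W x w) as [wd <-].
  set (fstD := @discH Xi W (Disc B) (fun x p => fst (proj1_sig p))).
  set (sndD := @discH Xi W (Disc B) (fun x p => snd (proj1_sig p))).
  set (toS := @discH Xi W S (fun x p => exist (relSub R x)
    (sect x (fst (proj1_sig p)), sect x (snd (proj1_sig p))) (R_sect_mono x _ _ (proj2_sig p)))).
  assert (E0 : fn (Mm M fstD) wd = zd).
  { apply (Mm_iota_inj M B); rewrite <- e0; Mm_congr. }
  assert (E1 : fn (Mm M sndD) wd = zd').
  { apply (Mm_iota_inj M B); rewrite <- e1; Mm_congr. }
  assert (hS := R_closed x (fn (Mm M toS) wd)).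
  rewrite <- E0, <- E1.
  replace (fn (Mm M sectD) (fn (Mm M fstD) wd)) with (rel_fst M R x (fn (Mm M toS) wd))
    by (unfold rel_fst; Mm_congr).
  replace (fn (Mm M sectD) (fn (Mm M sndD) wd)) with (rel_snd M R x (fn (Mm M toS) wd))
    by (unfold rel_snd; Mm_congr).
  exact hS.
Qed.

Lemma subalgebra_kernel_compat x (s t : car (Mo M A) x) :
  ole (Mo M B) (fn (Mm M phi) s) (fn (Mm M phi) t) -> R x (fn pi s) (fn pi t).
Proof.
  intro h.
  destruct (Mm_iota_surj M A x s) as [sd <-].
  destruct (Mm_iota_surj M A x t) as [td <-].
  assert (Ephi : forall ud : car (Mo M (Disc A)) x,
    fn (Mm M (iotaH B)) (fn (Mm M phiD) ud) = fn (Mm M phi) (fn (Mm M (iotaH A)) ud))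
    by (intro; Mm_congr).
  destruct (pi_sect_equiv x sd) as [hs _].
  destruct (pi_sect_equiv x td) as [_ ht].
  eapply R_trans; [exact hs|]; eapply R_trans; [|exact ht].
  apply pi_sect_mono; rewrite !Ephi; exact h.
Qed.

End SubalgebraKernel.

Lemma subalgebra_congruence {Xi} (M : Monad Xi) (A : Obj Xi) (pi : Hom (Mo M A) A)
  sq (Hsq : IsPreorderExt A sq) :
  IsSubalgebraRel M pi sq -> IsCongruenceOrdering M A pi sq Hsq.
Proof.
  intros H3 x s t; apply (subalgebra_kernel_compat M pi (qmap A sq Hsq) (qmap_surj A sq Hsq));
    [apply ker_qmap | exact H3].
Qed.

Theorem proposition3p8 (Xi : Type) (M : Monad Xi) (A : Obj Xi) (pi : Hom (Mo M A) A)
  (Hpi : IsAlg M A pi) (sq : forall x, car A x -> car A x -> Prop)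
  (Hsq : IsPreorderExt A sq) :
  let C1 := IsCongruenceOrdering M A pi sq Hsq in
  let C2 := exists (B : Obj Xi) (piB : Hom (Mo M B) B) (phi : Hom A B),
              IsAlg M B piB /\ IsAlgMorph M pi piB phi /\
              (forall x (a a' : car A x), sq x a a' <-> kerH phi x a a') in
  let C3 := forall x (u : car (Mo M (SubO (ProdO A A) (relSub sq))) x),
              sq x (fn pi (fn (Mm M (proj0 A A)) (fn (Mm M (incl _ (relSub sq))) u)))
                   (fn pi (fn (Mm M (proj1H A A)) (fn (Mm M (incl _ (relSub sq))) u))) in
  let C4 := forall x (u : car (Mo M (SubO (ProdO A A) (relSub sq))) x),
              relSub sq x (fn (prod_pi M pi) (fn (Mm M (incl _ (relSub sq))) u)) in
  (C1 <-> C2) /\ (C1 <-> C3) /\ (C1 <-> C4).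
Proof.
  cbv zeta.
  assert (c13 : IsCongruenceOrdering M A pi sq Hsq <-> IsSubalgebraRel M pi sq).
  { split; [intro H1 | apply subalgebra_congruence].
    destruct (congruence_kernel M A pi Hpi sq Hsq H1) as (B & piB & phi & _ & Hm & Hk).
    exact (kernel_subalgebra M pi piB phi sq Hm Hk). }
  (* C3 and C4 are both IsSubalgebraRel M pi sq up to unfolding; the components
     of prod_pi are pi o M p0 and pi o M p1. *)
  split; [| split; exact c13].
  split; [apply congruence_kernel, Hpi |].
  intros (B & piB & phi & _ & Hm & Hk).
  apply c13, (kernel_subalgebra M pi piB phi sq Hm Hk).
Qed.
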